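(* Let $\alpha\in\mathbb R\setminus\{0\}$ and $\mathbf L=\mathbf a^2-\alpha^2\mathbf 1$ on $\mathcal H_a$. Define $\mathcal E^a_{\mathbf L}=\mathrm{Span}\{(\mathbf L^\dagger)^j|v\rangle\mid j\in\mathbb N,\ |v\rangle\in\ker\mathbf L\}$ and $\mathcal E^\sharp_{\mathbf L}=\mathrm{Span}\{(\mathbf L^\dagger)^j[\mathbf L,\mathbf L^\dagger]|v\rangle\mid j\in\mathbb N,\ |v\rangle\in\ker\mathbf L\}$. Then $\mathcal E^a_{\mathbf L}+\mathcal E^\sharp_{\mathbf L}$ is dense in $\mathcal H_a$.
   Context: $\mathcal H_a=L^2(\mathbb R,\mathbb C)$ with Fock basis $(|n\rangle)$, $\mathbf a=\frac1{\sqrt2}(x+\partial_x)$ the annihilation operator, $\mathbf a^\dagger$ the creation operator. $\ker\mathbf L$ is spanned by the coherent states $|\alpha\rangle,|-\alpha\rangle$, where $|z\rangle=e^{-|z|^2/2}\sum_n\frac{z^n}{\sqrt{n!}}|n\rangle$; these vectors lie in the domain of every polynomial in $\mathbf a,\mathbf a^\dagger$, so the expressions above are well defined, with $[\mathbf L,\mathbf L^\dagger]=\mathbf L\mathbf L^\dagger-\mathbf L^\dagger\mathbf L$. *)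

From Stdlib Require Import Reals.
From Coquelicot Require Import Coquelicot.

(* H_a = L^2(R,C) is identified, through the Fock basis (|n>), with
   l^2(N,C): a vector is its sequence of Fock coefficients. *)
Definition state := nat -> C.

Definition in_l2 (psi : state) : Prop :=
  ex_series (fun n => (Cmod (psi n)) ^ 2).

(* squared Hilbert norm (meaningful when in_l2 holds) *)
Definition normsq (psi : state) : R := Series (fun n => (Cmod (psi n)) ^ 2).

(* annihilation a|n> = sqrt n |n-1>, i.e. (a psi)_n = sqrt(n+1) psi_(n+1) *)
Definition ann (psi : state) : state :=
  fun n => Cmult (RtoC (sqrt (INR (S n)))) (psi (S n)).

(* creation a^dag|n> = sqrt(n+1)|n+1>, i.e. (a^dag psi)_n = sqrt n psi_(n-1) *)
Definition cre (psi : state) : state :=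
  fun n => match n with
           | O => RtoC 0
           | S m => Cmult (RtoC (sqrt (INR (S m)))) (psi m)
           end.

Definition Lop (alpha : R) (psi : state) : state :=
  fun n => Cminus (ann (ann psi) n) (Cmult (RtoC (alpha ^ 2)) (psi n)).

Definition Ldag (alpha : R) (psi : state) : state :=
  fun n => Cminus (cre (cre psi) n) (Cmult (RtoC (alpha ^ 2)) (psi n)).

Definition commLLdag (alpha : R) (psi : state) : state :=
  fun n => Cminus (Lop alpha (Ldag alpha psi) n) (Ldag alpha (Lop alpha psi) n).

Definition kerL (alpha : R) (v : state) : Prop :=
  in_l2 v /\ forall n, Lop alpha v n = RtoC 0.

Inductive span (S : state -> Prop) : state -> Prop :=
  | span_zero : span S (fun _ => RtoC 0)
  | span_gen : forall v, S v -> span S v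
  | span_add : forall u w, span S u -> span S w ->
      span S (fun n => Cplus (u n) (w n))
  | span_scal : forall (c : C) u, span S u ->
      span S (fun n => Cmult c (u n)).

Definition E_a (alpha : R) : state -> Prop :=
  span (fun phi => exists (j : nat) (v : state),
          kerL alpha v /\ phi = Nat.iter j (Ldag alpha) v).

Definition E_sharp (alpha : R) : state -> Prop :=
  span (fun phi => exists (j : nat) (v : state),
          kerL alpha v /\ phi = Nat.iter j (Ldag alpha) (commLLdag alpha v)).

Definition sum_sub (A B : state -> Prop) : state -> Prop :=
  fun phi => exists u w, A u /\ B w /\ phi = (fun n => Cplus (u n) (w n)).

Definition dense_in_H (A : state -> Prop) : Prop :=
  forall psi, in_l2 psi -> forall eps : R, 0 < eps ->
    exists phi, A phi /\ in_l2 (fun n => Cminus (psi n) (phi n)) /\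
      normsq (fun n => Cminus (psi n) (phi n)) < eps.

(* In the Bargmann picture |n> = z^n / sqrt(n!), the space H_a becomes a space of
   entire functions on which a^dag is multiplication by z and a is d/dz.  Then
   L^dag = z^2 - alpha^2, e^{alpha z} spans part of ker L, and
   [L, L^dag] e^{alpha z} = (4 alpha z + 2) e^{alpha z}.  Both spans are stable
   under L^dag, hence under multiplication by z^2 = L^dag + alpha^2; starting from
   e^{alpha z} and (4 alpha z + 2) e^{alpha z} and using alpha <> 0 this yields
   every z^k e^{alpha z} in E^a + E^#.  Multiplying e^{alpha z} by the truncated
   Taylor series of e^{-alpha z} then approximates each monomial z^m, i.e. each
   Fock vector |m>, in norm, and a subspace that approximates every |m> is dense. *)

From Stdlib Require Import Reals Lra Lia Psatz FunctionalExtensionality IndefiniteDescription.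
From Coquelicot Require Import Coquelicot.
Open Scope R_scope.

Notation fact := Factorial.fact.

(** * Finite sums and tails of series *)

Lemma sum_n_le (f g : nat -> R) N : (forall k, f k <= g k) -> sum_n f N <= sum_n g N.
Proof. apply sum_n_m_le. Qed.

Lemma sum_n_nonneg (f : nat -> R) N : (forall k, 0 <= f k) -> 0 <= sum_n f N.
Proof.
  intros Hf. apply Rle_trans with (sum_n (fun _ => 0) N); [|apply sum_n_le, Hf].
  rewrite sum_n_Reals, sum_cte. lra.
Qed.

Lemma sum_n_mono (f : nat -> R) K d : (forall k, 0 <= f k) -> (K <= d)%nat ->
  sum_n f K <= sum_n f d.
Proof.
  intros Hf HKd. induction HKd as [|d _ IH]; [lra|].
  rewrite sum_Sn. change plus with Rplus. specialize (Hf (S d)). lra.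
Qed.

Lemma sum_n_term_le (f : nat -> R) k N : (forall k, 0 <= f k) -> (k <= N)%nat ->
  f k <= sum_n f N.
Proof.
  intros Hf HkN. apply Rle_trans with (sum_n f k); [|apply sum_n_mono; assumption].
  destruct k as [|k]; [rewrite sum_O; lra|].
  rewrite sum_Sn. change plus with Rplus. pose proof (sum_n_nonneg f k Hf). lra.
Qed.

Lemma Cmod_sum_n_le (f : nat -> C) N : Cmod (sum_n f N) <= sum_n (fun k => Cmod (f k)) N.
Proof. exact (@norm_sum_n_m _ C_NormedModule f 0 N). Qed.

Lemma sqr_sum_n_le (g : nat -> R) N :
  (sum_n g N) ^ 2 <= INR (S N) * sum_n (fun k => g k ^ 2) N.
Proof.
  induction N as [|N IH].
  - rewrite !sum_O. simpl. lra.
  - rewrite !sum_Sn. change plus with Rplus.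
    set (s := sum_n g N) in *. set (Q := sum_n (fun k => g k ^ 2) N) in *.
    set (x := g (S N)). rewrite !S_INR in *. set (n := INR N + 1) in *.
    assert (Hn : 0 < n) by (pose proof (pos_INR N); unfold n; lra).
    (* n ((n+1)(Q + x^2) - (s + x)^2) >= (s - n x)^2, using s^2 <= n Q *)
    assert (Hstep : 0 <= n * ((n + 1) * (Q + x ^ 2) - (s + x) ^ 2)).
    { pose proof (pow2_ge_0 (s - n * x)).
      assert ((n + 1) * s ^ 2 <= (n + 1) * (n * Q)) by (apply Rmult_le_compat_l; lra).
      nra. }
    apply Rmult_le_reg_l with n; [exact Hn|]. nra.
Qed.

Lemma Cmod_add_sqr_le x y : Cmod (x + y) ^ 2 <= 2 * Cmod x ^ 2 + 2 * Cmod y ^ 2.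
Proof.
  pose proof (Cmod_triangle x y). pose proof (Cmod_ge_0 (x + y)).
  pose proof (Cmod_ge_0 x). pose proof (Cmod_ge_0 y).
  pose proof (pow2_ge_0 (Cmod x - Cmod y)). nra.
Qed.

Definition tail (N : nat) (u : nat -> R) (n : nat) : R :=
  if (N <? n)%nat then u n else 0.

Lemma tail_nonneg N u n : (forall k, 0 <= u k) -> 0 <= tail N u n.
Proof. intros Hu. unfold tail. destruct (N <? n)%nat; [apply Hu|lra]. Qed.

Lemma is_series_tail u N : ex_series u -> is_series (tail N u) (Series u - sum_n u N).
Proof.
  intros Hu.
  set (head := fun n => if (N <? n)%nat then 0 else u n).
  assert (Hhead : is_series head (sum_n u N)).
  { apply filterlim_ext_loc with (fun _ => sum_n u N); [|apply filterlim_const].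
    exists N. intros n Hn. symmetry. induction Hn as [|n Hn IH].
    - apply sum_n_ext_loc. intros k Hk. unfold head.
      destruct (Nat.ltb_spec N k); [lia|reflexivity].
    - rewrite sum_Sn, IH. unfold head.
      destruct (Nat.ltb_spec N (S n)); [|lia]. apply Rplus_0_r. }
  pose proof (is_series_minus _ _ _ _ (Series_correct _ Hu) Hhead) as H.
  eapply is_series_ext; [|exact H]. intros n. unfold tail, head.
  destruct (N <? n)%nat; unfold minus, plus, opp; simpl; ring.
Qed.

Lemma tail_series_lt u eps : ex_series u -> 0 < eps -> exists N, Series (tail N u) < eps.
Proof.
  intros Hu Heps. pose proof (Series_correct _ Hu) as H.
  apply is_series_Reals in H. destruct (H eps Heps) as [N HN].
  exists N. rewrite (is_series_unique _ _ (is_series_tail u N Hu)), sum_n_Reals.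
  specialize (HN N (le_n N)). unfold R_dist in HN. rewrite Rabs_minus_sym in HN.
  pose proof (Rle_abs (Series u - sum_f_R0 u N)). lra.
Qed.

Lemma is_series_sum_n (u : nat -> nat -> R) (l : nat -> R) N :
  (forall m, is_series (u m) (l m)) ->
  is_series (fun n => sum_n (fun m => u m n) N) (sum_n l N).
Proof.
  intros Hu. induction N as [|N IH].
  - rewrite sum_O. eapply is_series_ext; [|apply Hu]. intros n. now rewrite sum_O.
  - rewrite sum_Sn. eapply is_series_ext; [|apply (is_series_plus _ _ _ _ IH (Hu (S N)))].
    intros n. now rewrite sum_Sn.
Qed.

Lemma l2_dominated (f : state) (b : nat -> R) (l : R) :
  (forall n, Cmod (f n) ^ 2 <= b n) -> is_series b l -> in_l2 f /\ normsq f <= l.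
Proof.
  intros Hfb Hb.
  assert (Hpt : forall n, 0 <= Cmod (f n) ^ 2 <= b n)
    by (intros n; split; [apply pow2_ge_0|apply Hfb]).
  split.
  - apply (ex_series_le (V := R_CompleteNormedModule)) with b; [|eexists; exact Hb].
    intros n. change (norm ?x) with (Rabs x). rewrite Rabs_pos_eq; apply Hpt.
  - unfold normsq. rewrite <- (is_series_unique _ _ Hb).
    apply Series_le; [exact Hpt|eexists; exact Hb].
Qed.

(** * Subspaces, spans and a density criterion *)

Definition zero_state : state := fun _ => RtoC 0.

Record subspace (V : state -> Prop) : Prop := {
  subspace0 : V zero_state;
  subspaceD : forall u w, V u -> V w -> V (fun n => (u n + w n)%C);
  subspaceZ : forall c u, V u -> V (fun n => (c * u n)%C) }.

Lemma subspace_lin V c u d w : subspace V -> V u -> V w ->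
  V (fun n => (c * u n + d * w n)%C).
Proof. intros HV Hu Hw. apply HV; apply HV; assumption. Qed.

Lemma subspace_sum_n V (c : nat -> C) (f : nat -> state) N : subspace V ->
  (forall k, V (f k)) -> V (fun n => sum_n (fun k => (c k * f k n)%C) N).
Proof.
  intros HV Hf. induction N as [|N IH].
  - replace (fun n => _) with (fun n => (c O * f O n)%C).
    + apply HV, Hf.
    + apply functional_extensionality; intros n. now rewrite sum_O.
  - replace (fun n => _) with
      (fun n => (sum_n (fun k => (c k * f k n)%C) N + c (S N) * f (S N) n)%C).
    + apply (subspaceD _ HV _ _ IH). apply HV, Hf.
    + apply functional_extensionality; intros n. now rewrite sum_Sn.
Qed.

Lemma span_subspace G : subspace (span G).
Proof. split; [apply span_zero | apply span_add | apply span_scal]. Qed.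

Lemma sum_sub_subspace A B : subspace A -> subspace B -> subspace (sum_sub A B).
Proof.
  intros HA HB. split.
  - exists zero_state, zero_state. split; [apply HA|split; [apply HB|]].
    apply functional_extensionality; intros n. unfold zero_state. ring.
  - intros ? ? [u1 [w1 [Hu1 [Hw1 ->]]]] [u2 [w2 [Hu2 [Hw2 ->]]]].
    exists (fun n => (u1 n + u2 n)%C), (fun n => (w1 n + w2 n)%C).
    split; [apply HA|split; [apply HB|]]; auto.
    apply functional_extensionality; intros n. ring.
  - intros c ? [u [w [Hu [Hw ->]]]].
    exists (fun n => (c * u n)%C), (fun n => (c * w n)%C).
    split; [apply HA|split; [apply HB|]]; auto.
    apply functional_extensionality; intros n. ring.
Qed.

Lemma sum_sub_l A B x : subspace B -> A x -> sum_sub A B x.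
Proof.
  intros HB Hx. exists x, zero_state. split; [exact Hx|split; [apply HB|]].
  apply functional_extensionality; intros n. unfold zero_state. ring.
Qed.

Lemma sum_sub_r A B x : subspace A -> B x -> sum_sub A B x.
Proof.
  intros HA Hx. exists zero_state, x. split; [apply HA|split; [exact Hx|]].
  apply functional_extensionality; intros n. unfold zero_state. ring.
Qed.

Record linear_map (F : state -> state) : Prop := {
  linearD : forall u w, F (fun n => (u n + w n)%C) = fun n => (F u n + F w n)%C;
  linearZ : forall c u, F (fun n => (c * u n)%C) = fun n => (c * F u n)%C }.

Lemma linear_map0 F : linear_map F -> F zero_state = zero_state.
Proof.
  intros HF. replace zero_state with (fun n => (RtoC 0 * zero_state n)%C) at 1.
  - rewrite (linearZ _ HF). apply functional_extensionality; intros n.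
    unfold zero_state. ring.
  - apply functional_extensionality; intros n. unfold zero_state. ring.
Qed.

Lemma span_map G F x : linear_map F -> (forall v, G v -> G (F v)) ->
  span G x -> span G (F x).
Proof.
  intros HF HG Hx. induction Hx as [|v Hv|u w _ IHu _ IHw|c u _ IHu].
  - change (span G (F zero_state)). rewrite (linear_map0 _ HF). apply span_zero.
  - apply span_gen, HG, Hv.
  - rewrite (linearD _ HF). apply span_add; assumption.
  - rewrite (linearZ _ HF). apply span_scal; assumption.
Qed.

Definition fock (m : nat) : state := fun n => if (n =? m)%nat then RtoC 1 else RtoC 0.

Definition l2_close (psi phi : state) (eps : R) : Prop :=
  in_l2 (fun n => (psi n - phi n)%C) /\ normsq (fun n => (psi n - phi n)%C) < eps.

Lemma fock_expansion_residual (psi : state) (phi : nat -> state) N n :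
  (psi n - sum_n (fun m => psi m * phi m n) N)%C
  = ((if (N <? n)%nat then psi n else 0)
     + sum_n (fun m => psi m * (fock m n - phi m n)) N)%C.
Proof.
  induction N as [|N IH].
  - rewrite !sum_O. unfold fock. destruct n; simpl; ring.
  - rewrite !sum_Sn. change plus with Cplus.
    replace (psi n - (sum_n (fun m => (psi m * phi m n)%C) N + psi (S N) * phi (S N) n))%C
      with ((psi n - sum_n (fun m => (psi m * phi m n)%C) N) - psi (S N) * phi (S N) n)%C
      by ring.
    rewrite IH. unfold fock.
    destruct (Nat.ltb_spec N n), (Nat.ltb_spec (S N) n), (Nat.eqb_spec n (S N));
      try lia; try subst n; ring.
Qed.

Lemma Cmod_residual_sqr_le (t : C) (c r : nat -> C) N :
  Cmod (t + sum_n (fun m => c m * r m) N)%C ^ 2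
  <= 2 * Cmod t ^ 2 + 2 * INR (S N) * sum_n (fun m => Cmod (c m) ^ 2 * Cmod (r m) ^ 2) N.
Proof.
  eapply Rle_trans; [apply Cmod_add_sqr_le|].
  apply Rplus_le_compat_l. rewrite Rmult_assoc. apply Rmult_le_compat_l; [lra|].
  eapply Rle_trans; [|eapply Rle_trans; [apply (sqr_sum_n_le (fun m => Cmod (c m * r m)))|]].
  - apply pow_incr. split; [apply Cmod_ge_0|apply Cmod_sum_n_le].
  - apply Rmult_le_compat_l; [apply pos_INR|]. apply sum_n_le. intros m.
    rewrite Cmod_mult, Rpow_mult_distr. lra.
Qed.

(* psi is approximated by sum_{m <= N} psi_m phi_m, with N cutting off the tail of psi
   and each phi_m close enough to |m> to make the accumulated error small. *)
Lemma dense_of_fock_approx (V : state -> Prop) : subspace V ->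
  (forall m eps, 0 < eps -> exists phi, V phi /\ l2_close (fock m) phi eps) ->
  dense_in_H V.
Proof.
  intros HV Happrox psi Hpsi eps Heps.
  set (p := fun n => Cmod (psi n) ^ 2).
  destruct (tail_series_lt p (eps / 4) Hpsi) as [N HN]; [lra|].
  set (Q := sum_n (fun m => Cmod (psi m) ^ 2) N).
  assert (HQ : 0 <= Q) by (apply sum_n_nonneg; intros; apply pow2_ge_0).
  pose proof (lt_0_INR (S N) (Nat.lt_0_succ N)) as HN1.
  set (delta := eps / (4 * INR (S N) * (Q + 1))).
  assert (Hdelta : 0 < delta) by (apply Rdiv_lt_0_compat; [lra|]; nra).
  destruct (functional_choice (fun m phi => V phi /\ l2_close (fock m) phi delta))
    as [phi Hphi].
  { intros m. apply Happrox, Hdelta. }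
  exists (fun n => sum_n (fun m => (psi m * phi m n)%C) N).
  split; [apply subspace_sum_n; [exact HV|apply Hphi]|].
  set (r := fun m n => (fock m n - phi m n)%C).
  set (err := sum_n (fun m => Cmod (psi m) ^ 2 * normsq (r m)) N).
  set (b := fun n => 2 * tail N p n
                     + 2 * INR (S N) * sum_n (fun m => Cmod (psi m) ^ 2 * Cmod (r m n) ^ 2) N).
  assert (Hb : is_series b (2 * Series (tail N p) + 2 * INR (S N) * err)).
  { apply (is_series_plus (V := R_NormedModule));
      apply (is_series_scal_l (V := R_NormedModule)).
    - apply Series_correct. eexists. apply is_series_tail, Hpsi.
    - apply is_series_sum_n. intros m.
      apply (is_series_scal_l (V := R_NormedModule)), Series_correct, Hphi. }
  assert (Hpt : forall n, Cmod (psi n - sum_n (fun m => (psi m * phi m n)%C) N)%C ^ 2 <= b n).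
  { intros n. rewrite fock_expansion_residual.
    eapply Rle_trans; [apply Cmod_residual_sqr_le|].
    unfold b, tail, p, r. destruct (N <? n)%nat; [lra|]. rewrite Cmod_0. lra. }
  assert (Herr : err <= Q * delta).
  { unfold Q. rewrite <- (sum_n_mult_r (K := R_Ring)). apply sum_n_le. intros m.
    apply Rmult_le_compat_l; [apply pow2_ge_0|]. apply Rlt_le, Hphi. }
  destruct (l2_dominated _ _ _ Hpt Hb) as [Hl2 Hnorm].
  split; [exact Hl2|]. eapply Rle_lt_trans; [exact Hnorm|].
  assert (Hdelta_eq : 4 * INR (S N) * (Q + 1) * delta = eps) by (unfold delta; field; nra).
  assert (2 * INR (S N) * err <= 2 * INR (S N) * (Q * delta))
    by (apply Rmult_le_compat_l; lra).
  nra.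
Qed.

(** * The Bargmann picture *)

Lemma INR_fact_gt0 n : 0 < INR (fact n).
Proof. apply lt_0_INR, Factorial.lt_O_fact. Qed.

Lemma INR_fact_S n : INR (fact (S n)) = INR (S n) * INR (fact n).
Proof. exact (mult_INR (S n) (fact n)). Qed.

Lemma pow_sqr_comm x d : (x ^ d) ^ 2 = (x ^ 2) ^ d.
Proof. rewrite <- !pow_mult. f_equal. lia. Qed.

Definition sqrt_fact (n : nat) : R := sqrt (INR (fact n)).

Lemma sqrt_fact_S n : sqrt_fact (S n) = sqrt (INR (S n)) * sqrt_fact n.
Proof. unfold sqrt_fact. rewrite INR_fact_S. apply sqrt_mult; apply pos_INR. Qed.

Lemma sqrt_fact_gt0 n : 0 < sqrt_fact n.
Proof. apply sqrt_lt_R0, INR_fact_gt0. Qed.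

(* The state of H_a corresponding to the entire function sum_n y_n z^n,
   under |n> = z^n / sqrt(n!). *)
Definition bargmann (y : nat -> R) : state := fun n => RtoC (sqrt_fact n * y n).

Definition mulz (y : nat -> R) : nat -> R :=
  fun n => match n with O => 0 | S m => y m end.

Definition derivz (y : nat -> R) : nat -> R := fun n => INR (S n) * y (S n).

Lemma cre_bargmann y : cre (bargmann y) = bargmann (mulz y).
Proof.
  apply functional_extensionality; intros [|n]; unfold cre, bargmann, mulz.
  - f_equal. ring.
  - rewrite <- RtoC_mult, sqrt_fact_S. f_equal. ring.
Qed.

Lemma ann_bargmann y : ann (bargmann y) = bargmann (derivz y).
Proof.
  apply functional_extensionality; intros n; unfold ann, bargmann, derivz.
  rewrite <- RtoC_mult, sqrt_fact_S. f_equal.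
  rewrite <- (sqrt_sqrt (INR (S n))) at 3 by apply pos_INR. ring.
Qed.

Definition Lz (a : R) (y : nat -> R) : nat -> R :=
  fun n => derivz (derivz y) n - a ^ 2 * y n.

Definition Ldagz (a : R) (y : nat -> R) : nat -> R :=
  fun n => mulz (mulz y) n - a ^ 2 * y n.

Lemma Lop_bargmann a y : Lop a (bargmann y) = bargmann (Lz a y).
Proof.
  unfold Lop. rewrite !ann_bargmann. apply functional_extensionality; intros n.
  unfold bargmann, Lz. rewrite <- RtoC_mult, <- RtoC_minus. f_equal. ring.
Qed.

Lemma Ldag_bargmann a y : Ldag a (bargmann y) = bargmann (Ldagz a y).
Proof.
  unfold Ldag. rewrite !cre_bargmann. apply functional_extensionality; intros n.
  unfold bargmann, Ldagz. rewrite <- RtoC_mult, <- RtoC_minus. f_equal. ring.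
Qed.

Lemma commLLdag_bargmann a y :
  commLLdag a (bargmann y) = bargmann (fun n => Lz a (Ldagz a y) n - Ldagz a (Lz a y) n).
Proof.
  unfold commLLdag. rewrite Ldag_bargmann, !Lop_bargmann, Ldag_bargmann.
  apply functional_extensionality; intros n.
  unfold bargmann. rewrite <- RtoC_minus. f_equal. ring.
Qed.

Lemma bargmann_lin c y d w :
  bargmann (fun n => c * y n + d * w n)
  = fun n => (RtoC c * bargmann y n + RtoC d * bargmann w n)%C.
Proof.
  apply functional_extensionality; intros n. unfold bargmann.
  rewrite <- !RtoC_mult, <- RtoC_plus. f_equal. ring.
Qed.

Lemma bargmann_sum_n (c : nat -> R) (f : nat -> nat -> R) K :
  bargmann (fun n => sum_n (fun k => c k * f k n) K)
  = fun n => sum_n (fun k => (RtoC (c k) * bargmann (f k) n)%C) K.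
Proof.
  apply functional_extensionality; intros n. unfold bargmann.
  induction K as [|K IH].
  - rewrite !sum_O, <- RtoC_mult. f_equal. simpl. ring.
  - rewrite !sum_Sn, <- IH. unfold plus; simpl.
    rewrite <- RtoC_mult, <- RtoC_plus. f_equal. ring.
Qed.

Lemma Cmod_bargmann_sqr y n : Cmod (bargmann y n) ^ 2 = INR (fact n) * y n ^ 2.
Proof.
  unfold bargmann. rewrite Cmod_R, pow2_abs, Rpow_mult_distr. unfold sqrt_fact.
  rewrite pow2_sqrt by apply pos_INR. reflexivity.
Qed.

(** * The functions z^k e^{a z} *)

(* Taylor coefficients of z^k e^{a z}. *)
Definition zexp (a : R) (k n : nat) : R :=
  if (k <=? n)%nat then a ^ (n - k) / INR (fact (n - k)) else 0.

Lemma zexp0 a n : zexp a 0 n = a ^ n / INR (fact n).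
Proof. unfold zexp. simpl. rewrite Nat.sub_0_r. reflexivity. Qed.

Lemma zexp_lt a k n : (n < k)%nat -> zexp a k n = 0.
Proof. intros H. unfold zexp. destruct (Nat.leb_spec k n); [lia|reflexivity]. Qed.

Lemma zexp_le a k n : (k <= n)%nat -> zexp a k n = a ^ (n - k) / INR (fact (n - k)).
Proof. intros H. unfold zexp. destruct (Nat.leb_spec k n); [reflexivity|lia]. Qed.

Lemma zexp_add a m k d : zexp a (m + k) (m + d) = zexp a k d.
Proof. induction m; simpl; auto. Qed.

Lemma mulz_zexp a k : mulz (zexp a k) = zexp a (S k).
Proof. apply functional_extensionality; intros [|n]; reflexivity. Qed.

Lemma Lz_zexp0 a n : Lz a (zexp a 0) n = 0.
Proof.
  unfold Lz, derivz. rewrite !zexp0, !INR_fact_S, !S_INR.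
  pose proof (INR_fact_gt0 n). pose proof (pos_INR n).
  simpl. field. lra.
Qed.

Lemma commutator_zexp0 a n :
  Lz a (Ldagz a (zexp a 0)) n - Ldagz a (Lz a (zexp a 0)) n
  = 4 * a * zexp a 1 n + 2 * zexp a 0 n.
Proof.
  assert (Hker : Ldagz a (Lz a (zexp a 0)) n = 0).
  { unfold Ldagz. rewrite Lz_zexp0.
    destruct n as [|[|m]]; simpl; rewrite ?Lz_zexp0; ring. }
  rewrite Hker. unfold Lz, Ldagz, derivz.
  destruct n as [|[|m]]; simpl mulz.
  - unfold zexp; simpl. field.
  - unfold zexp; simpl. field.
  - change (zexp a 1 (S (S m))) with (zexp a 0 (S m)).
    rewrite !zexp0, !INR_fact_S, !S_INR.
    pose proof (INR_fact_gt0 m). pose proof (pos_INR m). simpl. field. lra.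
Qed.

Lemma ex_series_exp x : ex_series (fun n => x ^ n / INR (fact n)).
Proof.
  exists (exp x). eapply is_series_ext; [|apply (is_exp_Reals x)].
  intros n. simpl. rewrite pow_n_pow. unfold scal; simpl. unfold mult; simpl.
  unfold Rdiv. ring.
Qed.

Lemma Cmod_bargmann_zexp0_sqr a n :
  Cmod (bargmann (zexp a 0) n) ^ 2 = (a ^ 2) ^ n / INR (fact n).
Proof.
  rewrite Cmod_bargmann_sqr, zexp0, <- pow_sqr_comm.
  pose proof (INR_fact_gt0 n). field. lra.
Qed.

Lemma kerL_zexp0 a : kerL a (bargmann (zexp a 0)).
Proof.
  split.
  - eapply ex_series_ext; [|apply (ex_series_exp (a ^ 2))].
    intros n. symmetry. apply Cmod_bargmann_zexp0_sqr.
  - intros n. rewrite Lop_bargmann. unfold bargmann. rewrite Lz_zexp0. f_equal. ring.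
Qed.

Lemma linear_map_Ldag a : linear_map (Ldag a).
Proof.
  split; intros; apply functional_extensionality; intros [|[|n]];
    unfold Ldag, cre; ring.
Qed.

Lemma E_a_Ldag a x : E_a a x -> E_a a (Ldag a x).
Proof.
  apply span_map; [apply linear_map_Ldag|].
  intros v [j [v0 [Hv0 ->]]]. exists (S j), v0. split; auto.
Qed.

Lemma E_sharp_Ldag a x : E_sharp a x -> E_sharp a (Ldag a x).
Proof.
  apply span_map; [apply linear_map_Ldag|].
  intros v [j [v0 [Hv0 ->]]]. exists (S j), v0. split; auto.
Qed.

Lemma subspace_mulz2 a V y : subspace V -> (forall x, V x -> V (Ldag a x)) ->
  V (bargmann y) -> V (bargmann (mulz (mulz y))).
Proof.
  intros HV HL Hy. rewrite <- !cre_bargmann.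
  replace (cre (cre (bargmann y)))
    with (fun n => (RtoC 1 * Ldag a (bargmann y) n + RtoC (a ^ 2) * bargmann y n)%C).
  - apply subspace_lin; auto.
  - apply functional_extensionality; intros n. unfold Ldag. ring.
Qed.

Lemma E_a_zexp_even a j : E_a a (bargmann (zexp a (2 * j))).
Proof.
  induction j as [|j IH].
  - apply span_gen. exists O, (bargmann (zexp a 0)). split; [apply kerL_zexp0|reflexivity].
  - replace (2 * S j)%nat with (S (S (2 * j))) by lia.
    rewrite <- (mulz_zexp a (S (2 * j))), <- (mulz_zexp a (2 * j)).
    apply (subspace_mulz2 a); [apply span_subspace|apply E_a_Ldag|exact IH].
Qed.

Lemma E_sharp_zexp a j :
  E_sharp a (bargmann (fun n => 4 * a * zexp a (S (2 * j)) n + 2 * zexp a (2 * j) n)).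
Proof.
  induction j as [|j IH].
  - apply span_gen. exists O, (bargmann (zexp a 0)). split; [apply kerL_zexp0|].
    simpl. rewrite commLLdag_bargmann. f_equal. apply functional_extensionality; intros n.
    symmetry. apply commutator_zexp0.
  - replace (2 * S j)%nat with (S (S (2 * j))) by lia.
    replace (fun n => _) with
      (mulz (mulz (fun n => 4 * a * zexp a (S (2 * j)) n + 2 * zexp a (2 * j) n))).
    + apply (subspace_mulz2 a); [apply span_subspace|apply E_sharp_Ldag|exact IH].
    + apply functional_extensionality; intros [|[|n]]; simpl.
      * unfold zexp; simpl. ring.
      * unfold zexp; simpl. ring.
      * reflexivity.
Qed.

Lemma sum_sub_zexp a k : a <> 0 -> sum_sub (E_a a) (E_sharp a) (bargmann (zexp a k)).
Proof.
  intros Ha. destruct (Nat.Even_or_Odd k) as [[j ->]|[j ->]].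
  - apply sum_sub_l; [apply span_subspace|apply E_a_zexp_even].
  - replace (zexp a (2 * j + 1)) with (fun n =>
      / (4 * a) * (4 * a * zexp a (S (2 * j)) n + 2 * zexp a (2 * j) n)
      + - / (2 * a) * zexp a (2 * j) n).
    + rewrite bargmann_lin.
      apply subspace_lin; [apply sum_sub_subspace; apply span_subspace| |].
      * apply sum_sub_r; [apply span_subspace|apply E_sharp_zexp].
      * apply sum_sub_l; [apply span_subspace|apply E_a_zexp_even].
    + apply functional_extensionality; intros n.
      rewrite Nat.add_1_r. field. exact Ha.
Qed.

(** * Approximating the Fock vectors *)

Lemma exp_coef_conv x y d :
  sum_n (fun k => x ^ k / INR (fact k) * (y ^ (d - k) / INR (fact (d - k)))) d
  = (x + y) ^ d / INR (fact d).
Proof.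
  rewrite sum_n_Reals, binomial. unfold Rdiv at 3. rewrite Rmult_comm, scal_sum.
  apply sum_eq. intros k Hk. unfold Binomial.C.
  pose proof (INR_fact_gt0 k). pose proof (INR_fact_gt0 (d - k)).
  pose proof (INR_fact_gt0 d). field. lra.
Qed.

Lemma fact_add_le m d : INR (fact (m + d)) <= 2 ^ (m + d) * INR (fact m) * INR (fact d).
Proof.
  pose proof (INR_fact_gt0 m). pose proof (INR_fact_gt0 d).
  assert (Hbin : Binomial.C (m + d) m <= 2 ^ (m + d)).
  { replace 2 with (1 + 1) by ring. rewrite binomial, <- sum_n_Reals.
    set (f := fun i => Binomial.C (m + d) i * 1 ^ i * 1 ^ (m + d - i)).
    assert (Hf : forall i, 0 <= f i).
    { intros i. unfold f, Binomial.C. rewrite !pow1, !Rmult_1_r.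
      pose proof (INR_fact_gt0 (m + d)). pose proof (INR_fact_gt0 i).
      pose proof (INR_fact_gt0 (m + d - i)). apply Rlt_le, Rdiv_lt_0_compat; nra. }
    apply Rle_trans with (f m); [unfold f; rewrite !pow1; lra|].
    apply sum_n_term_le; [exact Hf|lia]. }
  unfold Binomial.C in Hbin. replace (m + d - m)%nat with d in Hbin by lia.
  apply Rmult_le_compat_r with (r := INR (fact m) * INR (fact d)) in Hbin; [|nra].
  unfold Rdiv in Hbin. rewrite Rmult_assoc, Rinv_l in Hbin by nra. lra.
Qed.

Definition monomial (m n : nat) : R := if (n =? m)%nat then 1 else 0.

(* Taylor coefficients of z^m e^{a z} sum_{k <= K} (-a z)^k / k!, which tend to those of z^m. *)
Definition zexp_expansion (a : R) (m K n : nat) : R :=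
  sum_n (fun k => (-a) ^ k / INR (fact k) * zexp a (m + k) n) K.

(* Cauchy product of e^{-a z} and e^{a z}: the coefficients of their product are those of 1. *)
Lemma zexp_coef_exact a d K : (d <= K)%nat ->
  sum_n (fun k => (-a) ^ k / INR (fact k) * zexp a k d) K = monomial 0 d.
Proof.
  intros HdK.
  assert (Hcut : sum_n (fun k => (-a) ^ k / INR (fact k) * zexp a k d) K
                 = sum_n (fun k => (-a) ^ k / INR (fact k) * zexp a k d) d).
  { induction HdK as [|K HdK IH]; [reflexivity|].
    rewrite sum_Sn, IH, zexp_lt by lia. rewrite Rmult_0_r. apply Rplus_0_r. }
  rewrite Hcut, (sum_n_ext_loc _
    (fun k => (-a) ^ k / INR (fact k) * (a ^ (d - k) / INR (fact (d - k)))))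
    by (intros k Hk; rewrite zexp_le by lia; reflexivity).
  rewrite exp_coef_conv. replace (-a + a) with 0 by ring.
  unfold monomial. destruct d as [|d]; simpl; [field|]. unfold Rdiv. ring.
Qed.

Lemma zexp_coef_bound a d K : (K < d)%nat ->
  Rabs (sum_n (fun k => (-a) ^ k / INR (fact k) * zexp a k d) K)
  <= (2 * Rabs a) ^ d / INR (fact d).
Proof.
  intros HKd.
  eapply Rle_trans; [apply (@norm_sum_n_m _ R_NormedModule _ 0 K)|].
  eapply Rle_trans;
    [apply sum_n_mono; [intros k; apply Rabs_pos|apply Nat.lt_le_incl, HKd]|].
  rewrite (sum_n_ext_loc _
    (fun k => Rabs a ^ k / INR (fact k) * (Rabs a ^ (d - k) / INR (fact (d - k))))).
  - rewrite exp_coef_conv. replace (Rabs a + Rabs a) with (2 * Rabs a) by ring. lra.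
  - intros k Hk. change (norm ?x) with (Rabs x). rewrite zexp_le by lia. unfold Rdiv.
    rewrite !Rabs_mult, !Rabs_inv, <- !RPow_abs, Rabs_Ropp.
    rewrite !(Rabs_pos_eq (INR _)) by apply pos_INR. reflexivity.
Qed.

Lemma ratio_sqr_le F M D X T : 0 < F -> 0 < M -> 0 < D -> 0 <= X -> 0 <= T ->
  F <= T * M * D -> F * (X / D ^ 2) <= (T * M) ^ 2 * X / F.
Proof.
  intros HF HM HD HX HT HFT.
  assert (Hsq : F ^ 2 <= (T * M * D) ^ 2) by (apply pow_incr; lra).
  apply Rminus_le.
  replace (F * (X / D ^ 2) - (T * M) ^ 2 * X / F)
    with (X * (F ^ 2 - (T * M * D) ^ 2) / (F * D ^ 2)) by (field; lra).
  assert (Hnum : X * (F ^ 2 - (T * M * D) ^ 2) <= 0) by nra.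
  assert (Hden : 0 < / (F * D ^ 2))
    by (apply Rinv_0_lt_compat, Rmult_lt_0_compat; [lra|apply pow_lt; lra]).
  unfold Rdiv. nra.
Qed.

Definition exp_weight (a : R) (n : nat) : R := (16 * a ^ 2) ^ n / INR (fact n).

Lemma exp_weight_nonneg a n : 0 <= exp_weight a n.
Proof.
  apply Rmult_le_pos; [apply pow_le; nra|].
  apply Rlt_le, Rinv_0_lt_compat, INR_fact_gt0.
Qed.

Lemma weighted_coef_sqr_le a m d G : a <> 0 -> Rabs G <= (2 * Rabs a) ^ d / INR (fact d) ->
  INR (fact (m + d)) * G ^ 2 <= INR (fact m) ^ 2 / (4 * a ^ 2) ^ m * exp_weight a (m + d).
Proof.
  intros Ha HG.
  assert (Hq : 0 < 4 * a ^ 2) by (pose proof (pow2_gt_0 a Ha); lra).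
  pose proof (INR_fact_gt0 m). pose proof (INR_fact_gt0 d). pose proof (INR_fact_gt0 (m + d)).
  assert (HG2 : G ^ 2 <= (4 * a ^ 2) ^ d / INR (fact d) ^ 2).
  { replace ((4 * a ^ 2) ^ d / INR (fact d) ^ 2)
      with (((2 * Rabs a) ^ d / INR (fact d)) ^ 2).
    - rewrite <- pow2_abs. apply pow_incr. split; [apply Rabs_pos|exact HG].
    - replace (4 * a ^ 2) with ((2 * Rabs a) ^ 2)
        by (rewrite Rpow_mult_distr, pow2_abs; ring).
      rewrite <- pow_sqr_comm. field. lra. }
  assert (Hpow : (16 * a ^ 2) ^ (m + d)
                 = (2 ^ (m + d)) ^ 2 * (4 * a ^ 2) ^ m * (4 * a ^ 2) ^ d).
  { rewrite pow_sqr_comm, Rmult_assoc, <- pow_add, <- Rpow_mult_distr. f_equal. ring. }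
  eapply Rle_trans; [apply Rmult_le_compat_l; [lra|exact HG2]|].
  unfold exp_weight.
  replace (INR (fact m) ^ 2 / (4 * a ^ 2) ^ m * ((16 * a ^ 2) ^ (m + d) / INR (fact (m + d))))
    with ((2 ^ (m + d) * INR (fact m)) ^ 2 * (4 * a ^ 2) ^ d / INR (fact (m + d)))
    by (rewrite Hpow; field; split; [lra|apply pow_nonzero; lra]).
  apply ratio_sqr_le; try lra.
  - apply pow_le. lra.
  - apply pow_le. lra.
  - apply fact_add_le.
Qed.

Lemma zexp_expansion_error a m K n : a <> 0 ->
  INR (fact n) * (zexp_expansion a m K n - monomial m n) ^ 2
  <= INR (fact m) ^ 2 / (4 * a ^ 2) ^ m * tail K (exp_weight a) n.
Proof.
  intros Ha.
  assert (Hrhs : 0 <= INR (fact m) ^ 2 / (4 * a ^ 2) ^ m * tail K (exp_weight a) n).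
  { apply Rmult_le_pos; [|apply tail_nonneg, exp_weight_nonneg].
    apply Rle_mult_inv_pos; [apply pow2_ge_0|apply pow_lt; pose proof (pow2_gt_0 a Ha); lra]. }
  destruct (Nat.lt_ge_cases n m) as [Hnm|Hmn].
  - unfold zexp_expansion, monomial.
    rewrite (sum_n_ext _ (fun _ => 0)) by (intros k; rewrite zexp_lt by lia; apply Rmult_0_r).
    rewrite sum_n_Reals, sum_cte. destruct (Nat.eqb_spec n m); [lia|].
    replace (INR (fact n) * (0 * INR (S K) - 0) ^ 2) with 0 by ring. exact Hrhs.
  - replace n with (m + (n - m))%nat in * by lia. set (d := (n - m)%nat) in *.
    clearbody d. clear Hmn. unfold zexp_expansion.
    rewrite (sum_n_ext _ (fun k => (-a) ^ k / INR (fact k) * zexp a k d))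
      by (intros k; rewrite zexp_add; reflexivity).
    replace (monomial m (m + d)) with (monomial 0 d)
      by (unfold monomial; destruct (Nat.eqb_spec d 0), (Nat.eqb_spec (m + d) m);
          reflexivity || lia).
    destruct (Nat.le_gt_cases d K) as [HdK|HKd].
    + rewrite zexp_coef_exact by exact HdK.
      replace (INR (fact (m + d)) * (monomial 0 d - monomial 0 d) ^ 2) with 0 by ring.
      exact Hrhs.
    + replace (monomial 0 d) with 0 by (unfold monomial; destruct d; [lia|reflexivity]).
      unfold tail. destruct (Nat.ltb_spec K (m + d)); [|lia].
      rewrite Rminus_0_r. apply weighted_coef_sqr_le; [exact Ha|].
      apply zexp_coef_bound, HKd.
Qed.

Lemma Cmod_fock_sub_sqr m y n :
  Cmod (fock m n - RtoC (/ sqrt_fact m) * bargmann y n)%C ^ 2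
  = INR (fact n) / INR (fact m) * (monomial m n - y n) ^ 2.
Proof.
  pose proof (sqrt_fact_gt0 m).
  replace (fock m n - RtoC (/ sqrt_fact m) * bargmann y n)%C
    with (RtoC (/ sqrt_fact m * sqrt_fact n * (monomial m n - y n))).
  - rewrite Cmod_R, pow2_abs, !Rpow_mult_distr, pow_inv. unfold sqrt_fact.
    rewrite !pow2_sqrt by apply pos_INR. unfold Rdiv. ring.
  - unfold fock, monomial, bargmann.
    destruct (Nat.eqb_spec n m) as [->|];
      rewrite <- RtoC_mult, <- RtoC_minus; f_equal; field; lra.
Qed.

Lemma fock_approx a m eps : a <> 0 -> 0 < eps -> exists K,
  l2_close (fock m) (fun n => (RtoC (/ sqrt_fact m) * bargmann (zexp_expansion a m K) n)%C) eps.
Proof.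
  intros Ha Heps.
  pose proof (INR_fact_gt0 m) as Hm.
  assert (Hq : 0 < (4 * a ^ 2) ^ m) by (apply pow_lt; pose proof (pow2_gt_0 a Ha); lra).
  set (W := INR (fact m) / (4 * a ^ 2) ^ m).
  assert (HW : 0 <= W) by (apply Rle_mult_inv_pos; lra).
  assert (He : ex_series (exp_weight a)) by exact (ex_series_exp (16 * a ^ 2)).
  destruct (tail_series_lt (exp_weight a) (eps / (W + 1)) He) as [K HK];
    [apply Rdiv_lt_0_compat; lra|].
  exists K.
  set (b := fun n => W * tail K (exp_weight a) n).
  assert (Hb : is_series b (W * Series (tail K (exp_weight a)))).
  { apply (is_series_scal_l (V := R_NormedModule)), Series_correct.
    eexists. apply is_series_tail, He. }
  assert (Hpt : forall n,
    Cmod (fock m n - RtoC (/ sqrt_fact m) * bargmann (zexp_expansion a m K) n)%C ^ 2 <= b n).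
  { intros n. rewrite Cmod_fock_sub_sqr.
    replace (INR (fact n) / INR (fact m) * (monomial m n - zexp_expansion a m K n) ^ 2)
      with (/ INR (fact m) * (INR (fact n) * (zexp_expansion a m K n - monomial m n) ^ 2))
      by (field; lra).
    replace (b n)
      with (/ INR (fact m) * (INR (fact m) ^ 2 / (4 * a ^ 2) ^ m * tail K (exp_weight a) n))
      by (unfold b, W; field; lra).
    apply Rmult_le_compat_l; [apply Rlt_le, Rinv_0_lt_compat, Hm|].
    apply zexp_expansion_error, Ha. }
  destruct (l2_dominated _ _ _ Hpt Hb) as [Hl2 Hnorm].
  split; [exact Hl2|]. eapply Rle_lt_trans; [exact Hnorm|].
  assert (HK' : Series (tail K (exp_weight a)) * (W + 1) < eps).
  { apply Rmult_lt_compat_r with (r := W + 1) in HK; [|lra].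
    unfold Rdiv in HK. rewrite Rmult_assoc, Rinv_l in HK by lra. lra. }
  destruct (Rle_or_lt 0 (Series (tail K (exp_weight a)))); nra.
Qed.

Theorem lemma8 (alpha : R) (halpha : alpha <> 0%R) :
  dense_in_H (sum_sub (E_a alpha) (E_sharp alpha)).
Proof.
  assert (HT : subspace (sum_sub (E_a alpha) (E_sharp alpha)))
    by (apply sum_sub_subspace; apply span_subspace).
  apply dense_of_fock_approx; [exact HT|].
  intros m eps Heps.
  destruct (fock_approx alpha m eps halpha Heps) as [K HK].
  eexists; split; [|exact HK].
  apply (subspaceZ _ HT).
  unfold zexp_expansion. rewrite bargmann_sum_n.
  apply subspace_sum_n; [exact HT|]. intros k. apply sum_sub_zexp, halpha.
Qed.
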